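(* In the variable-assignment instance below, for every well-formed program $C$ and every $P\subseteq\mathcal S$: if $\mathrm{free}(P)\cap\mathrm{mod}(C)=\emptyset$, then $\vDash\{\Box P\}\ C\ \{\Box P\}$.
   Context: $\mathcal A=\langle U,+,\cdot,\mathbf 0,\mathbf 1\rangle$ is a partial semiring ($+$ commutative, associative, possibly partial, unit $\mathbf 0$; $\cdot$ total, associative, unit $\mathbf 1$; two-sided distributivity; $\mathbf 0$ annihilates), naturally ordered ($u\le v$ iff $\exists w.\,u+w=v$ is a partial order), Scott continuous, with a top element. Infinite sums are suprema of finite partial sums. $\mathcal W(X)$: maps $m:X\to U$ with countable support $\mathrm{supp}(m)=\{x:m(x)\ne\mathbf 0\}$ and defined mass, pointwise operations. $\eta(x)(y)=\mathbf 1$ if $x=y$ else $\mathbf 0$; $f^\dagger(m)(y)=\sum_{x\in\mathrm{supp}(m)}m(x)\cdot f(x)(y)$. States are stores $s\in\mathcal S=\mathsf{Var}\to\mathbb Z$ over a countable set of variables $\mathsf{Var}$. Atomic actions are assignments $x:=E$ with integer expressions $E$ (variables, integer constants, tests, $+,-,\times$) and $[\![x:=E]\!](s)=\eta(s[x\mapsto[\![E]\!](s)])$. Programs: $C::=\mathsf{skip}\mid C_1;C_2\mid C_1+C_2\mid\mathsf{assume}\ e\mid C^{\langle e,e'\rangle}\mid x:=E$, with $e$ a test (Boolean combination of $\mathsf{true},\mathsf{false}$ and arbitrary subsets $t\subseteq\mathcal S$, evaluating to $\mathbf 1$ iff true) or a weight $u\in U$. Semantics: $[\![\mathsf{skip}]\!](s)=\eta(s)$;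 $[\![C_1;C_2]\!](s)=[\![C_2]\!]^\dagger([\![C_1]\!](s))$; $[\![C_1+C_2]\!](s)=[\![C_1]\!](s)+[\![C_2]\!](s)$; $[\![\mathsf{assume}\ e]\!](s)=[\![e]\!](s)\cdot\eta(s)$; $[\![C^{\langle e,e'\rangle}]\!]$ is the least fixed point (pointwise order) of $\Phi(f)(s)=[\![e]\!](s)\cdot f^\dagger([\![C]\!](s))+[\![e']\!](s)\cdot\eta(s)$. Well-formed: semantics total. $\vDash\{\varphi\}C\{\psi\}$ for $\varphi,\psi\subseteq\mathcal W(\mathcal S)$ iff $[\![C]\!]^\dagger(m)\in\psi$ for every $m\in\varphi$. $\Box P=\{m:\mathrm{supp}(m)\subseteq P\}$. $\mathrm{free}(P)=\{x\in\mathsf{Var}:\exists s\in P, v\in\mathbb Z.\ s[x\mapsto v]\notin P\}$. $\mathrm{mod}(\mathsf{skip})=\mathrm{mod}(\mathsf{assume}\ e)=\emptyset$, $\mathrm{mod}(C_1;C_2)=\mathrm{mod}(C_1+C_2)=\mathrm{mod}(C_1)\cup\mathrm{mod}(C_2)$, $\mathrm{mod}(C^{\langle e,e'\rangle})=\mathrm{mod}(C)$, $\mathrm{mod}(x:=E)=\{x\}$. *)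

From Stdlib Require Import ZArith List Classical ClassicalEpsilon.
Import ListNotations.
Set Implicit Arguments.

Definition is_ub {T} (le : T -> T -> Prop) (D : T -> Prop) (u : T) : Prop :=
  forall d, D d -> le d u.
Definition is_lub {T} (le : T -> T -> Prop) (D : T -> Prop) (u : T) : Prop :=
  is_ub le D u /\ forall v, is_ub le D v -> le u v.
Definition directed {T} (le : T -> T -> Prop) (D : T -> Prop) : Prop :=
  (exists d, D d) /\
  forall a b, D a -> D b -> exists c, D c /\ le a c /\ le b c.

Record psemiring := PSemiring {
  car :> Type;
  padd : car -> car -> option car;
  pmul : car -> car -> car;
  pzero : car;
  pone : car;
  padd_comm : forall a b, padd a b = padd b a;
  padd_assoc : forall a b c,
    match padd a b with Some ab => padd ab c | None => None end =
    match padd b c with Some bc => padd a bc | None => None end;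
  padd_0r : forall a, padd a pzero = Some a;
  pmul_assoc : forall a b c, pmul a (pmul b c) = pmul (pmul a b) c;
  pmul_1l : forall a, pmul pone a = a;
  pmul_1r : forall a, pmul a pone = a;
  pmul_distr_l : forall a b c bc, padd b c = Some bc ->
    padd (pmul a b) (pmul a c) = Some (pmul a bc);
  pmul_distr_r : forall a b c bc, padd b c = Some bc ->
    padd (pmul b a) (pmul c a) = Some (pmul bc a);
  pmul_0l : forall a, pmul pzero a = pzero;
  pmul_0r : forall a, pmul a pzero = pzero
}.

Arguments padd {p}. Arguments pmul {p}. Arguments pzero {p}. Arguments pone {p}.

Section Semiring.
Variable A : psemiring.

Definition nle (u v : A) : Prop := exists w, padd u w = Some v.

(* naturally ordered: the natural order is a partial order
   (reflexivity and transitivity are automatic; antisymmetry is required) *)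
Definition naturally_ordered : Prop :=
  forall u v, nle u v -> nle v u -> u = v.

Definition scott_continuous : Prop :=
  (forall D : A -> Prop, directed nle D -> exists s, is_lub nle D s) /\
  (forall (D : A -> Prop) (s u : A), directed nle D -> is_lub nle D s ->
     (forall d, D d -> exists w, padd u d = Some w) ->
     exists v, padd u s = Some v /\
       is_lub nle (fun w => exists d, D d /\ padd u d = Some w) v) /\
  (forall (D : A -> Prop) (s u : A), directed nle D -> is_lub nle D s ->
     is_lub nle (fun w => exists d, D d /\ w = pmul u d) (pmul u s)) /\
  (forall (D : A -> Prop) (s u : A), directed nle D -> is_lub nle D s ->
     is_lub nle (fun w => exists d, D d /\ w = pmul d u) (pmul s u)).

Definition has_top : Prop := exists t : A, forall u, nle u t.

Fixpoint fsum {X} (f : X -> A) (l : list X) : option A :=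
  match l with
  | [] => Some pzero
  | x :: l' => match fsum f l' with Some s => padd (f x) s | None => None end
  end.

Definition is_sum {X} (f : X -> A) (I : X -> Prop) (u : A) : Prop :=
  (forall l, NoDup l -> Forall I l -> exists v, fsum f l = Some v) /\
  is_lub nle (fun v => exists l, NoDup l /\ Forall I l /\ fsum f l = Some v) u.

Definition supp {X} (m : X -> A) : X -> Prop := fun x => m x <> pzero.

Definition countable {X} (P : X -> Prop) : Prop :=
  exists f : X -> nat, forall x y, P x -> P y -> f x = f y -> x = y.

Definition inW {X} (m : X -> A) : Prop :=
  countable (supp m) /\ exists u, is_sum m (supp m) u.

Definition eta {X} (x : X) : X -> A :=
  fun y => if excluded_middle_informative (x = y) then pone else pzero.

Definition scale {X} (u : A) (m : X -> A) : X -> A := fun x => pmul u (m x).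

Definition wadd {X} (m1 m2 m : X -> A) : Prop :=
  (forall x, padd (m1 x) (m2 x) = Some (m x)) /\ inW m.

(* [bind m R m'] : for a (relationally given, possibly partial) map
   f : X -> W(Y), f^dagger(m) is defined and equals m'. *)
Definition bind {X Y} (m : X -> A) (R : X -> (Y -> A) -> Prop) (m' : Y -> A)
  : Prop :=
  exists g : X -> Y -> A,
    (forall x, supp m x -> R x (g x) /\ inW (g x)) /\
    (forall y, is_sum (fun x => pmul (m x) (g x y)) (supp m) (m' y)) /\
    inW m'.

End Semiring.

Arguments nle {A}. Arguments fsum {A X}. Arguments is_sum {A X}. Arguments supp {A X}.
Arguments inW {A X}. Arguments scale {A X}. Arguments wadd {A X}. Arguments bind {A X Y}.
Arguments eta A {X}.

Section Syntax.
Variable Var : Type.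
Definition store := Var -> Z.

Definition update (s : store) (x : Var) (v : Z) : store :=
  fun y => if excluded_middle_informative (y = x) then v else s y.

Inductive test :=
  | TTrue | TFalse | TAtom (t : store -> Prop)
  | TAnd (b1 b2 : test) | TOr (b1 b2 : test) | TNot (b : test).

Fixpoint teval (b : test) (s : store) : Prop :=
  match b with
  | TTrue => True | TFalse => False | TAtom t => t s
  | TAnd b1 b2 => teval b1 s /\ teval b2 s
  | TOr b1 b2 => teval b1 s \/ teval b2 s
  | TNot b => ~ teval b s
  end.

Inductive expr :=
  | EVar (x : Var) | EConst (z : Z) | ETest (b : test)
  | EAdd (e1 e2 : expr) | ESub (e1 e2 : expr) | EMul (e1 e2 : expr).

Fixpoint eeval (e : expr) (s : store) : Z :=
  match e with
  | EVar x => s x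
  | EConst z => z
  | ETest b => if excluded_middle_informative (teval b s) then 1%Z else 0%Z
  | EAdd e1 e2 => (eeval e1 s + eeval e2 s)%Z
  | ESub e1 e2 => (eeval e1 s - eeval e2 s)%Z
  | EMul e1 e2 => (eeval e1 s * eeval e2 s)%Z
  end.

Variable U : Type.

Inductive guard := GTest (b : test) | GWeight (u : U).

Inductive prog :=
  | Skip
  | PSeq (C1 C2 : prog)
  | PPlus (C1 C2 : prog)
  | Assume (e : guard)
  | Iter (C : prog) (e e' : guard)
  | Assign (x : Var) (E : expr).

Fixpoint modv (C : prog) : Var -> Prop :=
  match C with
  | Skip => fun _ => False
  | Assume _ => fun _ => False
  | PSeq C1 C2 | PPlus C1 C2 => fun y => modv C1 y \/ modv C2 y
  | Iter C _ _ => modv C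
  | Assign x _ => fun y => y = x
  end.

Definition free (P : store -> Prop) : Var -> Prop :=
  fun x => exists s v, P s /\ ~ P (update s x v).

End Syntax.

Arguments TTrue {Var}. Arguments TFalse {Var}.
Arguments Skip {Var U}. Arguments PSeq {Var U}. Arguments PPlus {Var U}. Arguments Assume {Var U}. Arguments Iter {Var U}. Arguments Assign {Var U}. Arguments GTest {Var U}. Arguments GWeight {Var U}.

Section Semantics.
Variable A : psemiring.
Variable Var : Type.
Notation S := (store Var).

Definition gsem (e : guard Var A) (s : S) : A :=
  match e with
  | GTest b => if excluded_middle_informative (teval b s) then pone else pzero
  | GWeight u => u
  end.

(* [PhiRel R e e' f g] : Phi(f) is defined and equals g, where
   Phi(f)(s) = [[e]](s) . f^dagger([[C]](s)) + [[e']](s) . eta(s),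
   and R is the semantics [[C]]. *)
Definition PhiRel (R : S -> (S -> A) -> Prop) (e e' : guard Var A)
  (f g : S -> S -> A) : Prop :=
  forall s, exists mC mb, R s mC /\ bind mC (fun x m => m = f x) mb /\
    wadd (scale (gsem e s) mb) (scale (gsem e' s) (eta A s)) (g s).

Definition is_lfp (R : S -> (S -> A) -> Prop) (e e' : guard Var A)
  (f : S -> S -> A) : Prop :=
  PhiRel R e e' f f /\
  forall g, PhiRel R e e' g g -> forall s x, nle (f s x) (g s x).

Fixpoint sem (C : prog Var A) : S -> (S -> A) -> Prop :=
  match C with
  | Skip => fun s m => m = eta A s
  | PSeq C1 C2 => fun s m => exists m1, sem C1 s m1 /\ bind m1 (sem C2) m
  | PPlus C1 C2 => fun s m => exists m1 m2,
      sem C1 s m1 /\ sem C2 s m2 /\ wadd m1 m2 m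
  | Assume e => fun s m => m = scale (gsem e s) (eta A s)
  | Iter C e e' => fun s m => exists f, is_lfp (sem C) e e' f /\ m = f s
  | Assign x E => fun s m => m = eta A (update s x (eeval E s))
  end.

Definition well_formed (C : prog Var A) : Prop := forall s, exists m, sem C s m.

Definition valid (phi : (S -> A) -> Prop) (C : prog Var A)
  (psi : (S -> A) -> Prop) : Prop :=
  forall m, phi m -> exists m', bind m (sem C) m' /\ psi m'.

Definition box (P : S -> Prop) : (S -> A) -> Prop :=
  fun m => inW m /\ forall s, supp m s -> P s.

End Semantics.

Arguments well_formed {A Var}. Arguments valid {A Var}. Arguments box A {Var}.
Arguments sem {A Var}. Arguments gsem {A Var}.

From Stdlib Require Import List Classical ClassicalEpsilon FunctionalExtensionality
  Permutation Cantor.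
Import ListNotations.
Set Implicit Arguments.

(* Since C never writes a variable that is free in P, every state reachable
   from s by C lies on the same side of P as s.  For an iteration this is the
   minimality of the fixed point f: cutting off from each f s the states on the
   other side of P from s yields another fixed point of Phi, so f s vanishes
   there.  It remains to see that the Kleisli extension [[C]]^dagger(m) is
   defined for every m in W(S).  The finite partial sums of its coefficient at
   y are dominated by those of m . top, so its coefficients exist by Scott
   continuity; its support is a countable union of countable supports; and its
   mass is defined because Scott continuity of addition turns the finite sums of
   these suprema into suprema of finite double sums, which are again dominated
   by partial sums of m . top. *)

Section PartialSemiring.
Context {A : psemiring}.

Definition oadd (x y : option A) : option A :=
  match x, y with Some a, Some b => padd a b | _, _ => None end.

Lemma padd_0l (a : A) : padd pzero a = Some a.
Proof. rewrite padd_comm; apply padd_0r. Qed.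

Lemma oadd_comm (x y : option A) : oadd x y = oadd y x.
Proof. destruct x, y; simpl; auto using padd_comm. Qed.

Lemma oadd_assoc (x y z : option A) : oadd (oadd x y) z = oadd x (oadd y z).
Proof.
  destruct x as [a|], y as [b|], z as [c|]; simpl; auto.
  all: first [exact (padd_assoc _ a b c) | now destruct (padd a b)
             | now destruct (padd b c)].
Qed.

Lemma oadd_lcomm (x y z : option A) : oadd x (oadd y z) = oadd y (oadd x z).
Proof. rewrite <- !oadd_assoc, (oadd_comm x y). reflexivity. Qed.

Lemma oadd_ACA (x y z w : option A) :
  oadd (oadd x y) (oadd z w) = oadd (oadd x z) (oadd y w).
Proof. rewrite !oadd_assoc, (oadd_lcomm y z w). reflexivity. Qed.

Lemma oadd_0l (x : option A) : oadd (Some pzero) x = x.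
Proof. destruct x; simpl; auto using padd_0l. Qed.

Lemma oadd_Some (x y : option A) z : oadd x y = Some z ->
  exists a b, x = Some a /\ y = Some b /\ padd a b = Some z.
Proof. destruct x, y; simpl; intro H; try discriminate; eauto. Qed.

Lemma nle_refl (a : A) : nle a a.
Proof. exists pzero; apply padd_0r. Qed.

Lemma nle0x (a : A) : nle pzero a.
Proof. exists a; apply padd_0l. Qed.

Lemma nle_trans (a b c : A) : nle a b -> nle b c -> nle a c.
Proof.
  intros [w1 H1] [w2 H2].
  assert (H : oadd (oadd (Some a) (Some w1)) (Some w2) = Some c)
    by (simpl; rewrite H1; exact H2).
  rewrite oadd_assoc in H. apply oadd_Some in H as (a' & w & [= <-] & Hw & Hc).
  exists w; exact Hc.
Qed.

Lemma padd_mono (a b c d e : A) : nle a b -> nle c d -> padd b d = Some e ->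
  exists f, padd a c = Some f /\ nle f e.
Proof.
  intros [w1 H1] [w2 H2] H.
  assert (H' : oadd (oadd (Some a) (Some w1)) (oadd (Some c) (Some w2)) = Some e)
    by (simpl; rewrite H1, H2; exact H).
  rewrite oadd_ACA in H'. apply oadd_Some in H' as (f & w & Hf & _ & He).
  exists f; split; [exact Hf | exists w; exact He].
Qed.

Lemma nle_pmull (a b c : A) : nle a b -> nle (pmul c a) (pmul c b).
Proof. intros [w H]. exists (pmul c w). apply pmul_distr_l, H. Qed.

Fixpoint osum {X} (F : X -> option A) (l : list X) : option A :=
  match l with [] => Some pzero | x :: l' => oadd (F x) (osum F l') end.

Lemma fsum_cons X (f : X -> A) x l : fsum f (x :: l) = oadd (Some (f x)) (fsum f l).
Proof. simpl. destruct (fsum f l); reflexivity. Qed.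

Lemma fsumE X (f : X -> A) l : fsum f l = osum (fun x => Some (f x)) l.
Proof. induction l; auto. rewrite fsum_cons, IHl. reflexivity. Qed.

Lemma fsum_perm X (f : X -> A) l l' : Permutation l l' -> fsum f l = fsum f l'.
Proof.
  induction 1.
  - reflexivity.
  - rewrite !fsum_cons, IHPermutation; reflexivity.
  - rewrite !fsum_cons. apply oadd_lcomm.
  - congruence.
Qed.

Lemma fsum_eq_in X (f h : X -> A) l :
  (forall x, In x l -> f x = h x) -> fsum f l = fsum h l.
Proof.
  induction l as [|x l IH]; intro H; auto.
  rewrite !fsum_cons, IH, (H x); simpl; auto.
  intros y Hy; apply H; now right.
Qed.

Lemma fsum_eq0 X (f : X -> A) l :
  (forall x, In x l -> f x = pzero) -> fsum f l = Some pzero.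
Proof.
  induction l as [|x l IH]; intro H; auto.
  rewrite fsum_cons, IH, (H x); simpl; auto using padd_0r.
  intros y Hy; apply H; now right.
Qed.

Lemma osum_eq0 X (l : list X) : osum (fun _ => Some pzero) l = Some pzero.
Proof. induction l; auto. simpl. rewrite IHl. apply padd_0r. Qed.

Lemma osum_oadd X (F G : X -> option A) l :
  osum (fun x => oadd (F x) (G x)) l = oadd (osum F l) (osum G l).
Proof.
  induction l; simpl.
  - rewrite padd_0r; auto.
  - rewrite IHl, oadd_ACA. reflexivity.
Qed.

Lemma osum_exchange X Y (F : X -> Y -> option A) lx ly :
  osum (fun y => osum (fun x => F x y) lx) ly = osum (fun x => osum (fun y => F x y) ly) lx.
Proof.
  induction ly; simpl.
  - symmetry; apply osum_eq0.
  - rewrite IHly, <- osum_oadd. reflexivity.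
Qed.

Lemma osum_le X (F G : X -> option A) l B :
  (forall x, In x l -> forall b, G x = Some b -> exists a, F x = Some a /\ nle a b) ->
  osum G l = Some B -> exists a, osum F l = Some a /\ nle a B.
Proof.
  revert B; induction l as [|x l IH]; simpl; intros B H HB.
  - exists pzero; split; auto using nle0x.
  - apply oadd_Some in HB as (b & B' & Hb & HB' & Hs).
    destruct (H x (or_introl eq_refl) b Hb) as (a1 & Ha1 & Hle1).
    destruct (IH B' (fun y Hy => H y (or_intror Hy)) HB') as (a2 & Ha2 & Hle2).
    destruct (padd_mono Hle1 Hle2 Hs) as (f & Hf & Hle).
    exists f. rewrite Ha1, Ha2. auto.
Qed.

Lemma fsum_le X (f h : X -> A) l B :
  (forall x, In x l -> nle (f x) (h x)) -> fsum h l = Some B ->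
  exists a, fsum f l = Some a /\ nle a B.
Proof.
  intros H HB. rewrite fsumE in *. refine (osum_le _ _ _ _ HB).
  intros x Hx b [= <-]. eauto.
Qed.

Lemma fsum_mulr X (f : X -> A) t l s :
  fsum f l = Some s -> fsum (fun x => pmul (f x) t) l = Some (pmul s t).
Proof.
  revert s; induction l as [|x l IH]; simpl; intros s H.
  - injection H as <-. rewrite pmul_0l. auto.
  - destruct (fsum f l) as [s'|]; [|discriminate].
    rewrite (IH s' eq_refl). apply pmul_distr_r, H.
Qed.

Lemma fsum_mull X (f : X -> A) t l s :
  fsum f l = Some s -> fsum (fun x => pmul t (f x)) l = Some (pmul t s).
Proof.
  revert s; induction l as [|x l IH]; simpl; intros s H.
  - injection H as <-. rewrite pmul_0r. auto.
  - destruct (fsum f l) as [s'|]; [|discriminate].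
    rewrite (IH s' eq_refl). apply pmul_distr_l, H.
Qed.

Lemma fsum_incl_le X (f : X -> A) l1 : forall l2 b,
  NoDup l1 -> NoDup l2 -> incl l1 l2 -> fsum f l2 = Some b ->
  exists a, fsum f l1 = Some a /\ nle a b.
Proof.
  induction l1 as [|x l1 IH]; intros l2 b Hn1 Hn2 Hi Hb.
  - exists pzero; split; auto using nle0x.
  - destruct (in_split _ _ (Hi x (or_introl eq_refl))) as (p & q & ->).
    rewrite (fsum_perm f (Permutation_sym (Permutation_middle p q x))), fsum_cons in Hb.
    apply oadd_Some in Hb as (fx & b' & [= <-] & Hb' & Hs).
    apply NoDup_cons_iff in Hn1 as [Hx Hn1].
    assert (Hi' : incl l1 (p ++ q)).
    { intros z Hz. specialize (Hi z (or_intror Hz)).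
      apply in_app_or in Hi as [Hi|[<-|Hi]]; auto using in_or_app; contradiction. }
    destruct (IH (p ++ q) b' Hn1 (NoDup_remove_1 _ _ _ Hn2) Hi' Hb') as (a' & Ha' & Hle).
    destruct (padd_mono (nle_refl (f x)) Hle Hs) as (r & Hr & Hle2).
    exists r. rewrite fsum_cons, Ha'. auto.
Qed.

Definition list_union {X} (l1 l2 : list X) : list X :=
  nodup (fun x y : X => excluded_middle_informative (x = y)) (l1 ++ l2).

Lemma NoDup_list_union X (l1 l2 : list X) : NoDup (list_union l1 l2).
Proof. apply NoDup_nodup. Qed.

Lemma incl_list_union_l X (l1 l2 : list X) : incl l1 (list_union l1 l2).
Proof. intros x Hx. apply nodup_In, in_or_app; auto. Qed.

Lemma incl_list_union_r X (l1 l2 : list X) : incl l2 (list_union l1 l2).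
Proof. intros x Hx. apply nodup_In, in_or_app; auto. Qed.

Lemma Forall_list_union X (P : X -> Prop) l1 l2 :
  Forall P l1 -> Forall P l2 -> Forall P (list_union l1 l2).
Proof.
  rewrite !Forall_forall. intros H1 H2 x Hx.
  apply nodup_In, in_app_or in Hx as [Hx|Hx]; auto.
Qed.

Definition psums {X} (f : X -> A) (I : X -> Prop) : A -> Prop :=
  fun v => exists l, NoDup l /\ Forall I l /\ fsum f l = Some v.

Lemma psums_directed X (f : X -> A) (I : X -> Prop) :
  (forall l, NoDup l -> Forall I l -> exists v, fsum f l = Some v) ->
  directed nle (psums f I).
Proof.
  intros Hdef. split.
  - exists pzero, []. repeat constructor.
  - intros a b (l1 & N1 & F1 & E1) (l2 & N2 & F2 & E2).
    pose proof (NoDup_list_union l1 l2) as N3.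
    pose proof (Forall_list_union F1 F2) as F3.
    destruct (Hdef _ N3 F3) as [c Ec].
    exists c. split; [exists (list_union l1 l2); auto|].
    destruct (fsum_incl_le f N1 N3 (incl_list_union_l l1 l2) Ec) as (a' & Ea & Ha).
    destruct (fsum_incl_le f N2 N3 (incl_list_union_r l1 l2) Ec) as (b' & Eb & Hb).
    rewrite E1 in Ea. rewrite E2 in Eb. injection Ea as <-. injection Eb as <-. auto.
Qed.

Lemma psums_common_bound X Y (F : Y -> X -> A) (I : X -> Prop) (c : Y -> A) L :
  (forall y, In y L -> psums (F y) I (c y)) ->
  exists ls, NoDup ls /\ Forall I ls /\
    forall y, In y L -> forall b, fsum (F y) ls = Some b -> nle (c y) b.
Proof.
  induction L as [|y L IH]; intro Hc.
  - exists []. repeat split; try constructor. intros y [].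
  - destruct IH as (l1 & N1 & F1 & H1); [intros z Hz; apply Hc; now right|].
    destruct (Hc y (or_introl eq_refl)) as (ly & Ny & Fy & Ey).
    exists (list_union l1 ly).
    split; [apply NoDup_list_union|split; [now apply Forall_list_union|]].
    intros z [<-|Hz] b Hb.
    + destruct (fsum_incl_le _ Ny (NoDup_list_union _ _) (incl_list_union_r l1 ly) Hb)
        as (a & Ea & Hle).
      rewrite Ey in Ea. now injection Ea as <-.
    + destruct (fsum_incl_le _ N1 (NoDup_list_union _ _) (incl_list_union_l l1 ly) Hb)
        as (a & Ea & Hle).
      exact (nle_trans (H1 z Hz a Ea) Hle).
Qed.

Lemma is_sum_eq0 X (f : X -> A) (I : X -> Prop) :
  (forall x, I x -> f x = pzero) -> is_sum f I pzero.
Proof.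
  intros Hz.
  assert (H0 : forall l, Forall I l -> fsum f l = Some pzero).
  { intros l Hl. apply fsum_eq0. rewrite Forall_forall in Hl. auto. }
  split; [|split].
  - intros l _ Hl. eauto.
  - intros d (l & _ & Hl & Hd). rewrite H0 in Hd; auto. injection Hd as <-. apply nle_refl.
  - intros v Hv. apply Hv. exists []. repeat constructor.
Qed.

Lemma fsum_supp X (h : X -> A) l :
  fsum h l = fsum h (filter (fun x => if excluded_middle_informative (supp h x)
                                     then true else false) l).
Proof.
  induction l as [|x l IH]; auto. simpl filter.
  destruct (excluded_middle_informative (supp h x)) as [Hx|Hx].
  - rewrite !fsum_cons, IH. reflexivity.
  - apply NNPP in Hx. rewrite fsum_cons, Hx, oadd_0l. exact IH.
Qed.

Lemma inW_fsum_defined X (h : X -> A) l :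
  inW h -> NoDup l -> exists v, fsum h l = Some v.
Proof.
  intros [_ [u [Hdef _]]] Hn. rewrite fsum_supp. apply Hdef.
  - now apply NoDup_filter.
  - apply Forall_forall. intros x Hx. apply filter_In in Hx as [_ Hx].
    now destruct (excluded_middle_informative (supp h x)).
Qed.

Definition restrict {X} (K : X -> Prop) (m : X -> A) : X -> A :=
  fun y => if excluded_middle_informative (K y) then m y else pzero.

Lemma supp_restrict X (K : X -> Prop) (m : X -> A) y :
  supp (restrict K m) y -> supp m y /\ K y.
Proof.
  unfold restrict, supp. destruct (excluded_middle_informative (K y)); auto.
  now intros [].
Qed.

Lemma restrict_ext X (K1 K2 : X -> Prop) (m : X -> A) :
  (forall y, K1 y <-> K2 y) -> restrict K1 m = restrict K2 m.
Proof.
  intro HK. apply functional_extensionality. intro y. unfold restrict.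
  destruct (excluded_middle_informative (K1 y)), (excluded_middle_informative (K2 y));
    firstorder.
Qed.

Lemma restrict_id X (K : X -> Prop) (m : X -> A) :
  (forall y, supp m y -> K y) -> restrict K m = m.
Proof.
  intro HK. apply functional_extensionality. intro y. unfold restrict.
  destruct (excluded_middle_informative (K y)) as [|Hy]; auto.
  apply NNPP. intro Hm. exact (Hy (HK y (fun E => Hm (eq_sym E)))).
Qed.

Lemma scale_restrict X (K : X -> Prop) u (m : X -> A) :
  scale u (restrict K m) = restrict K (scale u m).
Proof.
  apply functional_extensionality. intro y. unfold scale, restrict.
  destruct (excluded_middle_informative (K y)); auto using pmul_0r.
Qed.

Lemma eta_supp X (s y : X) : supp (eta A s) y -> y = s.
Proof.
  unfold supp, eta. destruct (excluded_middle_informative (s = y)); auto.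
  now intros [].
Qed.

Lemma scale_eta_supp X u (s y : X) : supp (scale u (eta A s)) y -> y = s.
Proof.
  intro H. apply eta_supp. intro E. apply H. unfold scale. rewrite E. apply pmul_0r.
Qed.

Lemma wadd_supp X (m1 m2 m : X -> A) y :
  wadd m1 m2 m -> supp m y -> supp m1 y \/ supp m2 y.
Proof.
  intros [Hadd _] Hy. apply NNPP. intro H. apply Hy.
  apply not_or_and in H as [H1 H2]. apply NNPP in H1, H2.
  specialize (Hadd y). rewrite H1, H2, padd_0r in Hadd. now injection Hadd.
Qed.

Section Continuity.
Hypothesis Hscott : scott_continuous A.

Lemma is_sum_exists X (f : X -> A) (I : X -> Prop) :
  (forall l, NoDup l -> Forall I l -> exists v, fsum f l = Some v) ->
  exists u, is_sum f I u.
Proof.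
  intros Hdef. destruct (proj1 Hscott _ (psums_directed f Hdef)) as [u Hu].
  exists u. split; auto.
Qed.

Lemma inW_restrict X (K : X -> Prop) (m : X -> A) : inW m -> inW (restrict K m).
Proof.
  intros [[c Hc] [u [Hdef _]]]. split.
  - exists c. intros x y Hx Hy. apply supp_restrict in Hx, Hy. apply Hc; tauto.
  - apply is_sum_exists. intros l Hn Hl.
    rewrite Forall_forall in Hl.
    rewrite (fsum_eq_in _ m).
    + apply Hdef; auto. apply Forall_forall. intros x Hx.
      exact (proj1 (supp_restrict (Hl x Hx))).
    + intros x Hx. unfold restrict.
      destruct (excluded_middle_informative (K x)) as [|HK]; auto. contradiction (proj2 (supp_restrict (Hl x Hx))).
Qed.

Lemma inW_single X (m : X -> A) s : (forall y, supp m y -> y = s) -> inW m.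
Proof.
  intros Hs. split.
  - exists (fun _ => 0). intros x y Hx Hy _. now rewrite (Hs x Hx), (Hs y Hy).
  - apply is_sum_exists. intros [|x [|y l]] Hn Hl.
    + eexists; reflexivity.
    + simpl. rewrite padd_0r. eauto.
    + exfalso. inversion Hl as [|? ? Hx Hl']. inversion Hl' as [|? ? Hy _].
      apply (Hs x) in Hx. apply (Hs y) in Hy. subst.
      apply NoDup_cons_iff in Hn. apply (proj1 Hn). now left.
Qed.

Lemma wadd_restrict X (K : X -> Prop) (m1 m2 m : X -> A) :
  wadd m1 m2 m -> wadd (restrict K m1) (restrict K m2) (restrict K m).
Proof.
  intros [Hadd HW]. split; [|now apply inW_restrict].
  intro y. unfold restrict. destruct (excluded_middle_informative (K y)); auto using padd_0r.
Qed.

Lemma padd_lub_defined (D : A -> Prop) s u :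
  directed nle D -> is_lub nle D s ->
  (forall d, D d -> exists w, padd u d = Some w) -> exists v, padd u s = Some v.
Proof.
  intros Hdir Hlub Hdef. destruct (proj1 (proj2 Hscott) D s u Hdir Hlub Hdef) as (v & Hv & _).
  eauto.
Qed.

Lemma bind_restrict X Y (m : X -> A) (f : X -> Y -> A) m' (K : Y -> Prop) :
  bind m (fun x k => k = f x) m' ->
  bind m (fun x k => k = restrict K (f x)) (restrict K m').
Proof.
  intros (g & Hg & Hsum & Hm').
  exists (fun x => restrict K (g x)). split; [|split].
  - intros x Hx. destruct (Hg x Hx) as [-> Hgx]. split; [reflexivity|now apply inW_restrict].
  - intro y. unfold restrict. destruct (excluded_middle_informative (K y)).
    + exact (Hsum y).
    + apply is_sum_eq0. intros x _. apply pmul_0r.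
  - now apply inW_restrict.
Qed.

Lemma fsum_lub_defined Y (D : Y -> A -> Prop) (s : Y -> A) :
  (forall y, directed nle (D y)) -> (forall y, is_lub nle (D y) (s y)) ->
  forall L, NoDup L -> forall u,
  (forall c, (forall y, In y L -> D y (c y)) -> exists v, oadd (Some u) (fsum c L) = Some v) ->
  exists v, oadd (Some u) (fsum s L) = Some v.
Proof.
  (* The offset [u] makes the statement inductive: peeling off [y], Scott
     continuity of addition at [D y] is applied to [u] and to [u + fsum c L]. *)
  intros Hdir Hlub. destruct (choice _ (fun y => proj1 (Hdir y))) as [c0 Hc0].
  induction L as [|y L IH]; intros HL u Hdef.
  - apply (Hdef s). intros ? [].
  - apply NoDup_cons_iff in HL as [Hy HL].
    set (upd (c : Y -> A) (d : A) :=
           fun z => if excluded_middle_informative (z = y) then d else c z).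
    assert (Hupd : forall c d, (forall z, In z L -> D z (c z)) -> D y d ->
              exists v, oadd (Some u) (oadd (Some d) (fsum c L)) = Some v).
    { intros c d HcL Hd. destruct (Hdef (upd c d)) as [v Hv].
      - intros z Hz. unfold upd. destruct (excluded_middle_informative (z = y)) as [->|Hzy].
        + exact Hd.
        + destruct Hz as [->|Hz]; [contradiction|auto].
      - rewrite fsum_cons, (fsum_eq_in (upd c d) c) in Hv.
        + unfold upd in Hv. destruct (excluded_middle_informative (y = y)); [eauto|congruence].
        + intros z Hz. unfold upd.
          destruct (excluded_middle_informative (z = y)); [subst; contradiction|reflexivity]. }
    destruct (padd_lub_defined u (Hdir y) (Hlub y)) as [v0 Hv0].
    { intros d Hd. destruct (Hupd c0 d (fun z _ => Hc0 z) Hd) as [v Hv].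
      rewrite <- oadd_assoc in Hv. apply oadd_Some in Hv as (w & _ & Hw & _). eauto. }
    destruct (IH HL v0) as [v Hv].
    + intros c HcL.
      destruct (Hupd c (c0 y) HcL (Hc0 y)) as [v Hv].
      rewrite oadd_lcomm in Hv. apply oadd_Some in Hv as (a & w & _ & Hw & _).
      destruct (padd_lub_defined w (Hdir y) (Hlub y)) as [v1 Hv1].
      { intros d Hd. destruct (Hupd c d HcL Hd) as [v' Hv'].
        rewrite oadd_lcomm, Hw in Hv'. simpl in Hv'. rewrite padd_comm in Hv'. eauto. }
      exists v1. change (padd u (s y)) with (oadd (Some u) (Some (s y))) in Hv0.
      rewrite <- Hv0, oadd_assoc, oadd_lcomm, Hw. simpl. rewrite padd_comm. exact Hv1.
    + exists v. rewrite fsum_cons, <- oadd_assoc.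
      change (oadd (Some u) (Some (s y))) with (padd u (s y)). rewrite Hv0. exact Hv.
Qed.

End Continuity.

Lemma bind_eq_in X Y (m : X -> A) (f h : X -> Y -> A) m' :
  bind m (fun x k => k = f x) m' -> (forall x, supp m x -> f x = h x) ->
  bind m (fun x k => k = h x) m'.
Proof.
  intros (g & Hg & Hsum & Hm') Hfh. exists g. split; auto.
  intros x Hx. destruct (Hg x Hx) as [-> Hgx]. auto.
Qed.

Section Natural.
Hypothesis Hnat : naturally_ordered A.

Lemma nle0 (a : A) : nle a pzero -> a = pzero.
Proof. intro H. apply Hnat; auto using nle0x. Qed.

Lemma is_sum_supp X (f : X -> A) (I : X -> Prop) u :
  is_sum f I u -> u <> pzero -> exists x, I x /\ supp f x.
Proof.
  intros [_ [_ Hleast]] Hu. apply NNPP. intro Hno. apply Hu, nle0, Hleast.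
  intros d (l & _ & Hl & Hd). rewrite fsum_eq0 in Hd.
  - injection Hd as <-. apply nle_refl.
  - intros x Hx. rewrite Forall_forall in Hl. apply NNPP. intro Hfx.
    exact (Hno (ex_intro _ x (conj (Hl x Hx) Hfx))).
Qed.

Lemma bind_supp X Y (m : X -> A) (R : X -> (Y -> A) -> Prop) m' y :
  bind m R m' -> supp m' y -> exists x k, supp m x /\ R x k /\ supp k y.
Proof.
  intros (g & Hg & Hsum & _) Hy.
  destruct (is_sum_supp (Hsum y) Hy) as (x & Hx & Hxy).
  exists x, (g x). split; [exact Hx|split; [exact (proj1 (Hg x Hx))|]].
  intro E. apply Hxy. cbn beta. rewrite E. apply pmul_0r.
Qed.

End Natural.
End PartialSemiring.

Lemma countable_subset X (P Q : X -> Prop) :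
  (forall x, P x -> Q x) -> countable Q -> countable P.
Proof. intros HPQ [c Hc]. exists c. auto. Qed.

Lemma countable_union X Y (I : X -> Prop) (K : X -> Y -> Prop) :
  countable I -> (forall x, countable (K x)) ->
  countable (fun y => exists x, I x /\ K x y).
Proof.
  intros [cI HcI] HK. destruct (choice _ HK) as [cK HcK].
  exists (fun y => match excluded_middle_informative (exists x, I x /\ K x y) with
           | left H => let x := proj1_sig (constructive_indefinite_description _ H) in
                       Cantor.to_nat (cI x, cK x y)
           | right _ => 0
           end).
  intros y1 y2 H1 H2.
  destruct (excluded_middle_informative (exists x, I x /\ K x y1)) as [E1|]; [|contradiction].
  destruct (excluded_middle_informative (exists x, I x /\ K x y2)) as [E2|]; [|contradiction].
  destruct (constructive_indefinite_description _ E1) as [x1 [I1 K1]].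
  destruct (constructive_indefinite_description _ E2) as [x2 [I2 K2]]. cbn [proj1_sig].
  intro E. apply (f_equal Cantor.of_nat) in E. rewrite !Cantor.cancel_of_to in E.
  injection E as Ex Ey. assert (x1 = x2) by auto. subst x2. exact (HcK x1 _ _ K1 K2 Ey).
Qed.

Section Bind.
Context {A : psemiring} {X Y : Type}.
Hypotheses (Hnat : naturally_ordered A) (Hscott : scott_continuous A).
Variables (t : A) (m : X -> A) (g : X -> Y -> A).
Hypotheses (Ht : forall u, nle u t) (Hm : inW m) (Hg : forall x, inW (g x)).

Lemma bind_coef_fsum_defined y l : NoDup l -> Forall (supp m) l ->
  exists v, fsum (fun x => pmul (m x) (g x y)) l = Some v.
Proof.
  intros Hn Hl. destruct Hm as [_ [um [Hdef _]]]. destruct (Hdef l Hn Hl) as [M HM].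
  destruct (fsum_le (fun x => pmul (m x) (g x y)) (fun x => pmul (m x) t)
              l (fun x _ => nle_pmull (m x) (Ht _)) (fsum_mulr m t l HM)) as (a & Ha & _).
  eauto.
Qed.

Lemma bind_coef_double_sum_defined ls L :
  NoDup ls -> Forall (supp m) ls -> NoDup L ->
  exists V, osum (fun y => osum (fun x => Some (pmul (m x) (g x y))) ls) L = Some V.
Proof.
  intros Hls HlsI HL. destruct Hm as [_ [um [Hdef _]]]. destruct (Hdef ls Hls HlsI) as [M HM].
  pose proof (fsum_mulr m t ls HM) as HMt. rewrite fsumE in HMt.
  assert (Hrow : forall x, In x ls -> forall b, Some (pmul (m x) t) = Some b ->
            exists a, osum (fun y => Some (pmul (m x) (g x y))) L = Some a /\ nle a b).
  { intros x _ b [= <-]. destruct (inW_fsum_defined (Hg x) HL) as [S HS].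
    exists (pmul (m x) S). split.
    - rewrite <- fsumE. exact (fsum_mull (g x) (m x) L HS).
    - apply nle_pmull, Ht. }
  rewrite (osum_exchange (fun x y => Some (pmul (m x) (g x y)))).
  destruct (osum_le _ _ ls Hrow HMt) as (V & HV & _). eauto.
Qed.

Variable m' : Y -> A.
Hypothesis Hm' : forall y, is_sum (fun x => pmul (m x) (g x y)) (supp m) (m' y).

Lemma fsum_bind_coef_defined L : NoDup L -> exists v, fsum m' L = Some v.
Proof.
  intro HL.
  assert (Hdir : forall y, directed nle (psums (fun x => pmul (m x) (g x y)) (supp m)))
    by (intro y; apply psums_directed, bind_coef_fsum_defined).
  destruct (fsum_lub_defined Hscott _ m' Hdir (fun y => proj2 (Hm' y)) HL pzero) as [v Hv].
  - intros c Hc. rewrite oadd_0l.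
    destruct (psums_common_bound (fun y x => pmul (m x) (g x y)) c L Hc)
      as (ls & Hls & HlsI & Hbound).
    destruct (bind_coef_double_sum_defined Hls HlsI HL) as [V HV].
    assert (Hcol : forall y, In y L -> forall b,
              osum (fun x => Some (pmul (m x) (g x y))) ls = Some b ->
              exists a, Some (c y) = Some a /\ nle a b).
    { intros y Hy b Hb. exists (c y). split; [reflexivity|].
      apply (Hbound y Hy). rewrite fsumE. exact Hb. }
    rewrite fsumE. destruct (osum_le _ _ L Hcol HV) as (a & Ha & _). eauto.
  - rewrite oadd_0l in Hv. eauto.
Qed.

Lemma inW_bind_coef : inW m'.
Proof.
  split.
  - apply (@countable_subset _ _ (fun y => exists x, supp m x /\ supp (g x) y)).
    + intros y Hy. destruct (is_sum_supp Hnat (Hm' y) Hy) as (x & Hx & Hxy).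
      exists x. split; [exact Hx|]. intro E. apply Hxy. cbn beta. rewrite E. apply pmul_0r.
    + apply countable_union; [exact (proj1 Hm)|intro x; exact (proj1 (Hg x))].
  - apply (is_sum_exists Hscott). intros L HL _. exact (fsum_bind_coef_defined HL).
Qed.

End Bind.

Lemma bind_total A (Hnat : naturally_ordered A) (Hscott : scott_continuous A)
  (Htop : has_top A) X Y (m : X -> A) (R : X -> (Y -> A) -> Prop) :
  inW m -> (forall x, exists k, R x k /\ inW k) -> exists m', bind m R m'.
Proof.
  intros Hm HR. destruct Htop as [t Ht]. destruct (choice _ HR) as [g Hg].
  destruct (choice _ (fun y => is_sum_exists Hscott _ (bind_coef_fsum_defined g Ht Hm y)))
    as [m' Hm'].
  exists m', g. split; [|split].
  - intros x _. exact (Hg x).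
  - exact Hm'.
  - exact (inW_bind_coef Hnat Hscott g Ht Hm (fun x => proj2 (Hg x)) m' Hm').
Qed.

Section Semantics.
Context {A : psemiring} {Var : Type}.
Hypotheses (Hnat : naturally_ordered A) (Hscott : scott_continuous A).
Notation S := (store Var).

Lemma sem_inW {C : prog Var A} {s m} : sem C s m -> inW m.
Proof.
  destruct C; simpl; intro H.
  - subst. apply (inW_single Hscott (s := s)), eta_supp.
  - destruct H as (m1 & _ & g & _ & _ & Hm). exact Hm.
  - destruct H as (m1 & m2 & _ & _ & _ & Hm). exact Hm.
  - subst. apply (inW_single Hscott (s := s)), scale_eta_supp.
  - destruct H as (f & [Hfix _] & ->). destruct (Hfix s) as (mC & mb & _ & _ & _ & Hm).
    exact Hm.
  - subst. apply (inW_single Hscott (s := update s x (eeval E s))), eta_supp.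
Qed.

Definition class_of (Q : S -> Prop) (s : S) : S -> Prop := fun y => Q y <-> Q s.

Definition class_preserving (R : S -> (S -> A) -> Prop) (Q : S -> Prop) : Prop :=
  forall s m, R s m -> forall y, supp m y -> class_of Q s y.

Lemma class_of_update (Q : S -> Prop) x s v : ~ free Q x -> class_of Q s (update s x v).
Proof.
  intro Hx. split; intro HQ; apply NNPP; intro HnQ; apply Hx.
  - exists (update s x v), (s x). split; [exact HQ|].
    replace (update (update s x v) x (s x)) with s; [exact HnQ|].
    apply functional_extensionality. intro y. unfold update.
    destruct (excluded_middle_informative (y = x)); congruence.
  - exists s, v. auto.
Qed.

Lemma PhiRel_restrict_class (R : S -> (S -> A) -> Prop) (e e' : guard Var A)
  (f : S -> S -> A) (Q : S -> Prop) :
  PhiRel A R e e' f f -> class_preserving R Q ->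
  let h s := restrict (class_of Q s) (f s) in PhiRel A R e e' h h.
Proof.
  intros Hfix HR h s. destruct (Hfix s) as (mC & mb & HC & Hb & Hw).
  exists mC, (restrict (class_of Q s) mb). split; [exact HC|split].
  - apply bind_eq_in with (f := fun x => restrict (class_of Q s) (f x)).
    + now apply bind_restrict.
    + intros x Hx. apply restrict_ext. intro y.
      pose proof (HR s mC HC x Hx). unfold class_of in *. tauto.
  - rewrite scale_restrict.
    rewrite <- (restrict_id (class_of Q s) (m := scale (gsem e' s) (eta A s))).
    + now apply wadd_restrict.
    + intros y Hy. rewrite (scale_eta_supp Hy). unfold class_of. tauto.
Qed.

Lemma lfp_class_preserving (R : S -> (S -> A) -> Prop) (e e' : guard Var A)
  (f : S -> S -> A) (Q : S -> Prop) :
  is_lfp A R e e' f -> class_preserving R Q ->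
  forall s y, supp (f s) y -> class_of Q s y.
Proof.
  intros [Hfix Hmin] HR s y Hy.
  pose proof (Hmin _ (PhiRel_restrict_class Hfix HR) s y) as Hle. cbn beta in Hle.
  unfold restrict in Hle.
  destruct (excluded_middle_informative (class_of Q s y)) as [Hc|Hc]; [exact Hc|].
  exact (False_ind _ (Hy (nle0 Hnat Hle))).
Qed.

Lemma sem_class_preserving (C : prog Var A) (Q : S -> Prop) :
  (forall x, free Q x -> modv C x -> False) -> class_preserving (sem C) Q.
Proof.
  induction C as [| C1 IH1 C2 IH2 | C1 IH1 C2 IH2 | e | C IH e e' | x E];
    intros HQ s m Hsem y Hy; simpl in Hsem.
  - subst. rewrite (eta_supp Hy). unfold class_of. tauto.
  - destruct Hsem as (m1 & H1 & Hbind).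
    destruct (bind_supp Hnat Hbind Hy) as (x & k & Hx & Hk & Hky).
    assert (Hsx : class_of Q s x)
      by exact (IH1 (fun z Hz Hm => HQ z Hz (or_introl Hm)) s m1 H1 x Hx).
    assert (Hxy : class_of Q x y)
      by exact (IH2 (fun z Hz Hm => HQ z Hz (or_intror Hm)) x k Hk y Hky).
    unfold class_of in *. tauto.
  - destruct Hsem as (m1 & m2 & H1 & H2 & Hadd).
    destruct (wadd_supp Hadd Hy) as [Hy1|Hy2].
    + exact (IH1 (fun z Hz Hm => HQ z Hz (or_introl Hm)) s m1 H1 y Hy1).
    + exact (IH2 (fun z Hz Hm => HQ z Hz (or_intror Hm)) s m2 H2 y Hy2).
  - subst. rewrite (scale_eta_supp Hy). unfold class_of. tauto.
  - destruct Hsem as (f & Hlfp & ->). exact (lfp_class_preserving Hlfp (IH HQ) s Hy).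
  - subst. rewrite (eta_supp Hy). apply class_of_update. intro Hx. exact (HQ x Hx eq_refl).
Qed.

End Semantics.

Theorem lemmaC1 (A : psemiring) (Var : Type)
  (Hcount : countable (fun _ : Var => True))
  (Hnat : naturally_ordered A) (Hscott : scott_continuous A) (Htop : has_top A)
  (C : prog Var A) (P : store Var -> Prop) :
  well_formed C ->
  (forall x, free P x -> modv C x -> False) ->
  valid (box A P) C (box A P).
Proof.
  intros Hwf Hfree m [Hm HmP].
  destruct (bind_total Hnat Hscott Htop (sem C) Hm) as [m' Hbind].
  { intro s. destruct (Hwf s) as [k Hk]. exists k. split; [exact Hk|exact (sem_inW Hscott Hk)]. }
  exists m'. split; [exact Hbind|split].
  - destruct Hbind as (_ & _ & _ & Hm'). exact Hm'.
  - intros y Hy. destruct (bind_supp Hnat Hbind Hy) as (x & k & Hx & Hk & Hky).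
    apply (sem_class_preserving Hnat Hscott C Hfree x Hk Hky), HmP, Hx.
Qed.
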